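(* Let $n\ge 1$, let $(p_1,\dots,p_n)$ be a probability vector (i.e. $p_i\ge 0$ and $\sum_{i=1}^n p_i=1$), and let $\beta>0$. Let $n_0$ be the number of indices $i$ with $p_i=0$, and let $p_1',\dots,p_{n-n_0}'$ denote the strictly positive entries among $p_1,\dots,p_n$. Define the R\'enyi entropy of order $\beta$ (for $\beta\neq 1$) by \[ {_\beta}H_n(p_1,\dots,p_n)=(1-\beta)^{-1}\log_2\sum_{i=1}^n p_i^\beta . \] Then: \begin{enumerate} \item if $0<\beta<1$, \[ {_\beta}H_n(p_1,\dots,p_n)\ \ge\ (1-\beta)^{-1}\Big(\log_2(n-n_0)+\frac{\beta}{n-n_0}\sum_{i=1}^{n-n_0}\log_2 p_i'\Big); \] \item if $\beta>1$, \[ {_\beta}H_n(p_1,\dots,p_n)\ \le\ (1-\beta)^{-1}\Big(\log_2(n-n_0)+\frac{\beta}{n-n_0}\sum_{i=1}^{n-n_0}\log_2 p_i'\Big). \] \end{enumerate}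
   Context: Convention: $0^\beta=0$ for $\beta>0$. *)

(* R : realType, powR (a `^ x) with 0 `^ b = 0 for b != 0. *)
From mathcomp Require Import all_boot all_order all_algebra.
From mathcomp Require Import all_classical all_reals all_analysis.
Set Implicit Arguments. Unset Strict Implicit. Unset Printing Implicit Defensive.
Import Order.TTheory GRing.Theory Num.Theory.
Local Open Scope ring_scope.

Definition log2 {R : realType} (x : R) : R := ln x / ln 2.

Definition renyi {R : realType} (n : nat) (b : R) (p : 'I_n -> R) : R :=
  (1 - b)^-1 * log2 (\sum_(i < n) p i `^ b).

Definition nzero {R : realType} (n : nat) (p : 'I_n -> R) : nat :=
  #|[set i : 'I_n | p i == 0]|.

Definition renyi_bound {R : realType} (n : nat) (b : R) (p : 'I_n -> R) : R :=
  (1 - b)^-1 * (log2 (n - nzero p)%:R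
     + b / (n - nzero p)%:R * \sum_(i < n | 0 < p i) log2 (p i)).

From mathcomp Require Import all_boot all_order all_algebra.
From mathcomp Require Import all_classical all_reals all_analysis.
Import Order.TTheory GRing.Theory Num.Theory.
Local Open Scope ring_scope.

(* Zero entries contribute nothing to either side, since [0 `^ b = 0].  On the
   support, of size m, AM-GM for the positive numbers p_i^b gives
   m^-1 * sum_i ln p_i^b <= ln (sum_i p_i^b / m), that is
   log2 m + b/m * sum_i log2 p_i <= log2 (sum_i p_i^b).  Multiplying by
   (1 - b)^-1, positive for b < 1 and negative for b > 1, yields both
   inequalities. *)

Section LogAGM.
Context {R : realType} {I : finType} {A : {pred I}} {x : I -> R}.
Hypothesis x_gt0 : {in A, forall i, 0 < x i}.

Lemma prodr_gt0_in : 0 < \prod_(i in A) x i.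
Proof. by apply: prodr_gt0 => i /x_gt0. Qed.

Lemma ln_prod : ln (\prod_(i in A) x i) = \sum_(i in A) ln (x i).
Proof.
rewrite -[RHS]expRK expR_sum.
by congr ln; apply: eq_bigr => i /x_gt0 xi_gt0; rewrite lnK ?posrE.
Qed.

Lemma sumr_gt0_in : (0 < #|A|)%N -> 0 < \sum_(i in A) x i.
Proof.
case/card_gt0P => j Aj; rewrite (bigD1 j) //= ltr_pwDl ?x_gt0 //.
by apply: sumr_ge0 => i /andP[/x_gt0/ltW].
Qed.

Lemma sum_ln_le_card_ln_mean : (0 < #|A|)%N ->
  \sum_(i in A) ln (x i) <= #|A|%:R * ln ((\sum_(i in A) x i) / #|A|%:R).
Proof.
move=> A_gt0; have S_gt0 := sumr_gt0_in A_gt0.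
rewrite -ln_prod mulr_natl -lnXn ?divr_gt0 ?ltr0n //.
rewrite ler_ln ?posrE ?prodr_gt0_in ?exprn_gt0 ?divr_gt0 ?ltr0n //.
by apply: leif_AGM => i /x_gt0/ltW.
Qed.

Lemma ln_card_add_mean_ln_le_ln_sum : (0 < #|A|)%N ->
  ln #|A|%:R + #|A|%:R^-1 * \sum_(i in A) ln (x i) <= ln (\sum_(i in A) x i).
Proof.
move=> A_gt0; have m_gt0 : 0 < #|A|%:R :> R by rewrite ltr0n.
rewrite -lerBrDl ler_pdivrMl //.
by rewrite -ln_div ?posrE ?sumr_gt0_in // sum_ln_le_card_ln_mean.
Qed.

End LogAGM.

Section ProbabilityVector.
Context {R : realType} {n : nat} {p : 'I_n -> R}.
Hypothesis p_ge0 : forall i, 0 <= p i.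

Let support := [pred i | 0 < p i].

Lemma sum_powR_support b : b != 0 ->
  \sum_(i < n) p i `^ b = \sum_(i | 0 < p i) p i `^ b.
Proof.
move=> b_neq0; rewrite (bigID support) /= [X in _ + X]big1 ?addr0 // => i.
by rewrite lt_def p_ge0 andbT negbK => /eqP->; rewrite powR0.
Qed.

Lemma card_support : (n - nzero p)%N = #|support|.
Proof.
have -> : nzero p = #|[predC support]|.
  by apply: eq_card => i; rewrite !inE lt_def p_ge0 andbT negbK.
by rewrite -[n in (n - _)%N]card_ord -[#|'I_n|](cardC support) addnK.
Qed.

Lemma card_support_gt0 : \sum_(i < n) p i = 1 -> (0 < #|support|)%N.
Proof.
rewrite lt0n; apply: contra_eqN => /eqP/card0_eq supp0.
rewrite big1 1?eq_sym ?oner_eq0 // => i _.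
by apply/eqP/negbFE; have := supp0 i; rewrite !inE lt_def p_ge0 andbT.
Qed.

Lemma log2_card_support_le b : \sum_(i < n) p i = 1 ->
  log2 #|support|%:R + b / #|support|%:R * \sum_(i | 0 < p i) log2 (p i)
    <= log2 (\sum_(i | 0 < p i) p i `^ b).
Proof.
move=> p_sum1; have powR_gt0_supp : {in support, forall i, 0 < p i `^ b}.
  by move=> i; apply: powR_gt0.
have := ln_card_add_mean_ln_le_ln_sum powR_gt0_supp (card_support_gt0 p_sum1).
rewrite /log2 -mulr_suml mulrA -mulrDl ler_pM2r ?invr_gt0 ?ln_gt0 ?ltr1n //.
by under eq_bigr => i _ do rewrite ln_powR; rewrite -mulr_sumr mulrCA mulrA.
Qed.

End ProbabilityVector.

Theorem mainTheorem1 (R : realType) (n : nat) (p : 'I_n -> R) (b : R) :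
  (1 <= n)%N ->
  (forall i, 0 <= p i) -> \sum_(i < n) p i = 1 ->
  0 < b ->
  (b < 1 -> renyi_bound b p <= renyi b p) /\
  (1 < b -> renyi b p <= renyi_bound b p).
Proof.
(* [1 <= n] is implied by [\sum_i p i = 1]. *)
move=> _ p_ge0 p_sum1 b_gt0.
have key := log2_card_support_le p_ge0 b p_sum1.
rewrite /renyi /renyi_bound (card_support p_ge0).
rewrite (sum_powR_support p_ge0) ?gt_eqF //.
split=> [b_lt1 | b_gt1].
  by rewrite ler_wpM2l // invr_ge0 subr_ge0 ltW.
by rewrite ler_wnM2l // invr_le0 subr_le0 ltW.
Qed.
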